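(* Let $G=(V,E)$ be a finite, simple, undirected, connected graph with no isolated vertices that has at least one split independent set. Then $\beta_s(G)\le \Gamma_s(G)$ and $\gamma_s(G)\le i_s(G)$.
   Context: For $X\subseteq V$, $\langle X\rangle$ denotes the induced subgraph on $X$. A set $D\subseteq V$ is dominating if every vertex of $V\setminus D$ has a neighbor in $D$. A dominating set $S$ is a split dominating set if $\langle V\setminus S\rangle$ is disconnected or a $K_1$. A split dominating set $S$ is a minimal split dominating set if for every $u\in S$ the set $S\setminus\{u\}$ is not a split dominating set. A set $S$ is a split independent set if $S$ is independent and $\langle V\setminus S\rangle$ is disconnected or a $K_1$; it is a maximal split independent set if for every $v\in V\setminus S$, either $S\cup\{v\}$ is not independent or $\langle V\setminus (S\cup\{v\})\rangle$ is connected. Parameters: $\gamma_s(G)=\min\{|S|: S\text{ split dominating}\}$; $\Gamma_s(G)=\max\{|S|: S\text{ minimal split dominating}\}$; $i_s(G)=\min\{|S|: S\text{ maximal split independent}\}$; $\beta_s(G)=\max\{|S|: S\text{ maximal split independent}\}$. *)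

(* a finite simple graph is a symmetric irreflexive
   relation e on a finType T (vertex set V = T). *)
From mathcomp Require Import all_boot.
Set Implicit Arguments. Unset Strict Implicit. Unset Printing Implicit Defensive.

Section SplitDom.
Variables (T : finType) (e : rel T).

Definition induced_rel (X : {set T}) : rel T :=
  [rel a b | [&& a \in X, b \in X & e a b]].

Definition induced_connected (X : {set T}) : bool :=
  [forall x in X, forall y in X, connect (induced_rel X) x y].

Definition induced_disconnected (X : {set T}) : bool := ~~ induced_connected X.

Definition disc_or_K1 (X : {set T}) : bool :=
  induced_disconnected X || (#|X| == 1).

Definition dominating (D : {set T}) : bool :=
  [forall v in ~: D, exists u in D, e v u].

Definition independent (S : {set T}) : bool :=
  [forall u in S, forall v in S, ~~ e u v].

Definition split_dominating (S : {set T}) : bool :=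
  dominating S && disc_or_K1 (~: S).

Definition minimal_split_dominating (S : {set T}) : bool :=
  split_dominating S && [forall u in S, ~~ split_dominating (S :\ u)].

Definition split_independent (S : {set T}) : bool :=
  independent S && disc_or_K1 (~: S).

Definition maximal_split_independent (S : {set T}) : bool :=
  split_independent S &&
  [forall v in ~: S, ~~ independent (v |: S) || induced_connected (~: (v |: S))].

(* gamma_s: minimum cardinality of a split dominating set
   (default #|T|.+1 if there is none) *)
Definition gamma_s : nat :=
  \big[minn/#|T|.+1]_(S : {set T} | split_dominating S) #|S|.

(* Gamma_s: maximum cardinality of a minimal split dominating set (0 if none) *)
Definition Gamma_s : nat :=
  \max_(S : {set T} | minimal_split_dominating S) #|S|.

Definition i_s : nat :=
  \big[minn/#|T|.+1]_(S : {set T} | maximal_split_independent S) #|S|.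

Definition beta_s : nat :=
  \max_(S : {set T} | maximal_split_independent S) #|S|.

End SplitDom.

From mathcomp Require Import all_boot.

(* Every maximal split independent set S is a minimal split dominating set.
   Independence gives minimality at once: a vertex u of S has no neighbour in
   S :\ u, so S :\ u no longer dominates u.  For domination, a vertex v outside
   S without neighbours in S could be added to S keeping it independent, so by
   maximality <V \ (S + v)> is connected; v has a neighbour u, necessarily
   outside S, and attaching v to that connected graph through u shows that
   <V \ S> is connected with at least two vertices, contradicting splitness.
   Hence beta_s <= Gamma_s, and gamma_s <= i_s since the minimum defining
   gamma_s ranges over a superset of the sets defining i_s. *)

Set Implicit Arguments. Unset Strict Implicit. Unset Printing Implicit Defensive.

Lemma geq_bigmin_cond (I : finType) (P : pred I) (F : I -> nat) n i :
  P i -> \big[minn/n]_(j | P j) F j <= F i.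
Proof.
move=> Pi; rewrite -big_filter.
have : i \in [seq j <- index_enum I | P j] by rewrite mem_filter Pi mem_index_enum.
elim: [seq j <- index_enum I | P j] => //= a s IHs.
rewrite inE big_cons => /orP[/eqP-> | /IHs]; first exact: geq_minl.
exact: leq_trans (geq_minr _ _).
Qed.

Section MaximalSplitIndependent.
Variables (T : finType) (e : rel T).
Hypotheses (e_sym : symmetric e) (e_irr : irreflexive e).

Lemma independentP (S : {set T}) :
  reflect {in S &, forall a b, ~~ e a b} (independent e S).
Proof.
apply: (iffP forall_inP) => [indS a b aS bS | indS a aS].
  by move/forall_inP: (indS a aS); apply.
by apply/forall_inP => b bS; apply: indS.
Qed.

Lemma independent_setU1 (S : {set T}) v :
  independent e S -> [forall u in S, ~~ e v u] -> independent e (v |: S).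
Proof.
move=> /independentP indS /forall_inP nbv; apply/independentP.
move=> a b; rewrite !in_setU1 => /predU1P[-> | aS] /predU1P[-> | bS].
- by rewrite e_irr.
- exact: nbv.
- by rewrite e_sym; apply: nbv.
- exact: indS.
Qed.

Lemma induced_connected_setU1 (X : {set T}) u v :
  induced_connected e X -> u \in X -> e v u -> induced_connected e (v |: X).
Proof.
move=> /forall_inP connX uX evu.
set R := induced_rel e (v |: X).
have R_sym : symmetric R by move=> a b; rewrite /R /induced_rel /= e_sym andbCA.
have subR : subrel (induced_rel e X) (connect R).
  move=> a b /and3P[aX bX eab]; apply: connect1.
  by rewrite /R /induced_rel /= !in_setU1 aX bX eab !orbT.
have toU z : z \in v |: X -> connect R z u.
  case/setU1P => [-> | zX]; first by rewrite connect1 // /R /induced_rel /= setU11 in_setU1 uX orbT.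
  by apply: (connect_sub subR); move/forall_inP: (connX z zX); apply.
apply/forall_inP => x xX; apply/forall_inP => y yX.
by rewrite (connect_trans (toU x xX)) // (sym_connect_sym R_sym) toU.
Qed.

Lemma independent_dominating_minimal (S : {set T}) u :
  independent e S -> u \in S -> ~~ dominating e (S :\ u).
Proof.
move=> /independentP indS uS; apply/negP => /forall_inP/(_ u).
rewrite !inE eqxx => /(_ isT) /exists_inP[w]; rewrite !inE => /andP[_ wS].
by rewrite (negbTE (indS _ _ uS wS)).
Qed.

Hypothesis no_isolated : forall v : T, exists u : T, e v u.

Lemma maximal_split_independent_dominating (S : {set T}) :
  maximal_split_independent e S -> dominating e S.
Proof.
case/andP=> /andP[indS splitS] /forall_inP maxS.
apply/forall_inP => v vS; case: (boolP [exists u in S, e v u]) => // nbv.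
rewrite negb_exists_in in nbv.
have conn_vS : induced_connected e (~: (v |: S)).
  by move: (maxS v vS); rewrite independent_setU1 //= => /orP[].
have [u evu] := no_isolated v.
have uS : u \notin S by apply: contraTN evu => uS; move/forall_inP: nbv; apply.
have uv : u != v by apply: contraTneq evu => ->; rewrite e_irr.
have uvS : u \in ~: (v |: S) by rewrite !inE negb_or uv.
have coS : ~: S = v |: ~: (v |: S).
  apply/setP => z; rewrite !inE negb_or; case: eqP => [-> | _] //.
  by rewrite inE in vS.
have two_le_coS : 1 < #|~: S|.
  by rewrite coS cardsU1 (cardD1 u) uvS !inE eqxx.
move: splitS; rewrite /disc_or_K1 /induced_disconnected coS.
by rewrite (induced_connected_setU1 conn_vS uvS evu) -coS (gtn_eqF two_le_coS).
Qed.

Lemma maximal_split_independent_minimal (S : {set T}) :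
  maximal_split_independent e S -> minimal_split_dominating e S.
Proof.
move=> msiS; have /andP[/andP[indS splitS] _] := msiS.
rewrite /minimal_split_dominating /split_dominating splitS.
rewrite maximal_split_independent_dominating //=.
apply/forall_inP => u uS; apply/negP => /andP[domSu _].
by rewrite (negbTE (independent_dominating_minimal indS uS)) in domSu.
Qed.

End MaximalSplitIndependent.

Theorem mainTheorem3 (T : finType) (e : rel T)
  (e_sym : symmetric e) (e_irr : irreflexive e)
  (G_conn : forall x y : T, connect e x y)
  (no_isolated : forall v : T, exists u : T, e v u)
  (has_split_indep : exists S : {set T}, split_independent e S) :
  (beta_s e <= Gamma_s e) /\ (gamma_s e <= i_s e).
Proof.
have msd := maximal_split_independent_minimal e_sym e_irr no_isolated.
split.
  by apply/bigmax_leqP => S /msd msdS; apply: leq_bigmax_cond.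
apply: (big_ind (fun n => gamma_s e <= n)).
- apply: (big_ind (fun n => n <= #|T|.+1)) => // [m n | S _].
    by rewrite geq_min => ->.
  exact/leqW/max_card.
- by move=> m n gm gn; rewrite leq_min gm gn.
- by move=> S /msd/andP[sdS _]; apply: geq_bigmin_cond.
Qed.
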